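(* Let $A\in M_n(\mathbb{C})$ and $1\le m\le k\le n$. Then $$\|D^m\vee^kA\|=\frac{k!}{(k-m)!}\|A\|^{k-m}.$$
   Context: $\vee^kA$ denotes the $k$-th symmetric tensor power of $A$, i.e. the restriction of $A\otimes\cdots\otimes A$ ($k$ factors) to the symmetric subspace $\vee^k\mathbb{C}^n\subseteq\otimes^k\mathbb{C}^n$. $D^m\vee^k(A)(X^1,\ldots,X^m)=\frac{\partial^m}{\partial t_1\cdots\partial t_m}\big|_{t=0}\vee^k(A+t_1X^1+\cdots+t_mX^m)$. $\|\cdot\|$ is the operator (spectral) norm, and $\|D^m\vee^kA\|=\sup_{\|X^1\|=\cdots=\|X^m\|=1}\|D^m\vee^k(A)(X^1,\ldots,X^m)\|$. *)

From Stdlib Require Import Reals Lra Lia List Permutation Arith ClassicalEpsilon.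
Import ListNotations.
Open Scope R_scope.

Record C := mkC { Re : R; Im : R }.
Definition C0 : C := mkC 0 0.
Definition C1 : C := mkC 1 0.
Definition Cadd (z w : C) : C := mkC (Re z + Re w) (Im z + Im w).
Definition Cmul (z w : C) : C :=
  mkC (Re z * Re w - Im z * Im w) (Re z * Im w + Im z * Re w).
Definition Cscale (r : R) (z : C) : C := mkC (r * Re z) (r * Im z).
Definition Cnorm2 (z : C) : R := Re z * Re z + Im z * Im z.

Definition Csum {A : Type} (l : list A) (f : A -> C) : C :=
  fold_right (fun x acc => Cadd (f x) acc) C0 l.
Definition Cprod {A : Type} (l : list A) (f : A -> C) : C :=
  fold_right (fun x acc => Cmul (f x) acc) C1 l.
Definition Rsum {A : Type} (l : list A) (f : A -> R) : R :=
  fold_right (fun x acc => f x + acc) 0 l.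

(* a vector of C^n is x : nat -> C (only x 0, ..., x (n-1) matter);
   a matrix of M_n(C) is A : nat -> nat -> C (only entries i,j < n matter). *)
Definition Mat := nat -> nat -> C.

Definition vnorm (n : nat) (x : nat -> C) : R :=
  sqrt (Rsum (seq 0 n) (fun i => Cnorm2 (x i))).

Definition matvec (n : nat) (A : Mat) (x : nat -> C) : nat -> C :=
  fun i => Csum (seq 0 n) (fun j => Cmul (A i j) (x j)).

Definition is_opnorm (n : nat) (A : Mat) (r : R) : Prop :=
  is_lub (fun s => exists x, vnorm n x = 1 /\ s = vnorm n (matvec n A x)) r.

(* basis of (x)^k C^n indexed by multi-indices: lists of length k with entries < n *)
Fixpoint tuples (n k : nat) : list (list nat) :=
  match k with
  | O => [[]]
  | S k' => flat_map (fun i => map (cons i) (tuples n k')) (seq 0 n)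
  end.

Definition tnorm (n k : nat) (v : list nat -> C) : R :=
  sqrt (Rsum (tuples n k) (fun I => Cnorm2 (v I))).

Definition symmetric_tensor (n k : nat) (v : list nat -> C) : Prop :=
  forall I J, In I (tuples n k) -> Permutation I J -> v I = v J.

Definition TMat := list nat -> list nat -> C.

Definition tmatvec (n k : nat) (E : TMat) (v : list nat -> C) : list nat -> C :=
  fun I => Csum (tuples n k) (fun J => Cmul (E I J) (v J)).

(* matrix entries of M (x) ... (x) M  (k factors) *)
Definition tensor_pow (k : nat) (M : Mat) : TMat :=
  fun I J => Cprod (seq 0 k) (fun p => M (nth p I O) (nth p J O)).

(* r is the operator norm of the restriction of E to the symmetric subspace
   \/^k C^n (E is assumed to leave it invariant, as all operators below do) *)
Definition is_sym_opnorm (n k : nat) (E : TMat) (r : R) : Prop :=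
  is_lub (fun s => exists v, symmetric_tensor n k v /\ tnorm n k v = 1 /\
                             s = tnorm n k (tmatvec n k E v)) r.

Definition upd (t : nat -> R) (j : nat) (s : R) : nat -> R :=
  fun i => if Nat.eqb i j then s else t i.

(* partial derivative in the coordinate t_j (chosen by epsilon; all functions
   below are polynomial in t, so these derivatives genuinely exist) *)
Definition partial (j : nat) (f : (nat -> R) -> R) : (nat -> R) -> R :=
  fun t => epsilon (inhabits 0)
             (fun l => derivable_pt_lim (fun s => f (upd t j s)) (t j) l).

Fixpoint iter_partial (m : nat) (f : (nat -> R) -> R) : (nat -> R) -> R :=
  match m with
  | O => f
  | S m' => partial m' (iter_partial m' f)
  end.

Definition mixed_deriv_at0 (m : nat) (f : (nat -> R) -> C) : C :=
  mkC (iter_partial m (fun t => Re (f t)) (fun _ => 0))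
      (iter_partial m (fun t => Im (f t)) (fun _ => 0)).

Definition perturb (m : nat) (A : Mat) (Xs : nat -> Mat) (t : nat -> R) : Mat :=
  fun i j => Cadd (A i j) (Csum (seq 0 m) (fun l => Cscale (t l) (Xs l i j))).

(* D^m \/^k (A)(X^0, ..., X^{m-1}) :
   d^m/dt_0...dt_{m-1} |_{t=0} of (x)^k (A + sum t_l X^l), entrywise;
   its restriction to the symmetric subspace is D^m \/^k (A)(X^0,...,X^{m-1}). *)
Definition D_sympow (m k : nat) (A : Mat) (Xs : nat -> Mat) : TMat :=
  fun I J => mixed_deriv_at0 m (fun t => tensor_pow k (perturb m A Xs t) I J).

Definition is_D_sympow_norm (n m k : nat) (A : Mat) (r : R) : Prop :=
  is_lub (fun s => exists Xs : nat -> Mat,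
              (forall l, (l < m)%nat -> is_opnorm n (Xs l) 1) /\
              is_sym_opnorm n k (D_sympow m k A Xs) s) r.

(* Write A_t := A + t_0 X^0 + ... + t_{m-1} X^{m-1}.  Every entry of the tensor power of A_t is a
   product of k entries, so the mixed derivative d^m/dt_0...dt_{m-1} at t = 0 puts each X^l into one of
   the k tensor slots, distinct l into distinct slots, and A into the remaining ones.  Splitting off
   the first slot shows that the operator so built from s unit-norm directions has norm at most
   c(k, s), where c(k+1, s) = ||A|| c(k, s) + s c(k, s-1); hence c(k, s) = k!/(k-s)! ||A||^(k-s)
   is the upper bound.
   For the lower bound take a unit vector x, write A x = mu w with w a unit vector, and set every
   X^l := w x^*.  The derivative maps the symmetric tensor x (x) ... (x) x to
   c(k, m)|_{||A|| = mu} w (x) ... (x) w, and mu can be taken arbitrarily close to ||A||. *)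

From Stdlib Require Import Reals Arith Lra Lia Psatz List Permutation.
From Stdlib Require Import ClassicalEpsilon FunctionalExtensionality Classical.
(* Imported last, so that the complex numbers [C] of Defs shadow the binomial coefficients of Reals. *)
From Pilot Require Import Defs.
Import ListNotations.
Open Scope R_scope.

Lemma Cext (z w : C) : Re z = Re w -> Im z = Im w -> z = w.
Proof. destruct z, w; simpl; intros; subst; reflexivity. Qed.

Ltac Cring := apply Cext; simpl; ring.

Lemma Cmul_comm a b : Cmul a b = Cmul b a.
Proof. Cring. Qed.

Lemma Cmul_assoc a b c : Cmul (Cmul a b) c = Cmul a (Cmul b c).
Proof. Cring. Qed.

Lemma Cmul_addl a b c : Cmul (Cadd a b) c = Cadd (Cmul a c) (Cmul b c).
Proof. Cring. Qed.

Lemma Cnorm2_nonneg z : 0 <= Cnorm2 z.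
Proof. unfold Cnorm2; nra. Qed.

Lemma Cnorm2_mul a b : Cnorm2 (Cmul a b) = Cnorm2 a * Cnorm2 b.
Proof. unfold Cnorm2; simpl; ring. Qed.

Lemma Cnorm2_scale c b : Cnorm2 (Cscale c b) = c * c * Cnorm2 b.
Proof. unfold Cnorm2; simpl; ring. Qed.

Lemma Cnorm2_add u v :
  Cnorm2 (Cadd u v) = Cnorm2 u + Cnorm2 v + 2 * (Re u * Re v + Im u * Im v).
Proof. unfold Cnorm2; simpl; ring. Qed.

Lemma Cnorm2_eq0 z : Cnorm2 z = 0 -> z = C0.
Proof.
  destruct z as [a b]; unfold Cnorm2; simpl; intros H.
  assert (a = 0) by nra; assert (b = 0) by nra; subst; reflexivity.
Qed.

Section FiniteSums.
Context {X : Type}.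
Implicit Types (l : list X) (f g : X -> R) (u v : X -> C).

Lemma Rsum_app l1 l2 f : Rsum (l1 ++ l2) f = Rsum l1 f + Rsum l2 f.
Proof. induction l1; simpl; [ring | rewrite IHl1; ring]. Qed.

Lemma Rsum_ext l f g : (forall x, In x l -> f x = g x) -> Rsum l f = Rsum l g.
Proof. induction l; simpl; intros H; auto. rewrite H, IHl; auto. Qed.

Lemma Rsum_plus l f g : Rsum l (fun x => f x + g x) = Rsum l f + Rsum l g.
Proof. induction l; simpl; [ring | rewrite IHl; ring]. Qed.

Lemma Rsum_scal l c f : Rsum l (fun x => c * f x) = c * Rsum l f.
Proof. induction l; simpl; [ring | rewrite IHl; ring]. Qed.

Lemma Rsum_const l c : Rsum l (fun _ => c) = INR (length l) * c.
Proof. induction l; simpl Rsum; [simpl; ring |]. rewrite IHl; simpl length; rewrite S_INR; ring. Qed.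

Lemma Rsum_le l f g : (forall x, In x l -> f x <= g x) -> Rsum l f <= Rsum l g.
Proof.
  induction l; simpl; intros H; [lra |].
  pose proof (H a (or_introl eq_refl)); pose proof (IHl (fun x h => H x (or_intror h))); lra.
Qed.

Lemma Rsum_nonneg l f : (forall x, In x l -> 0 <= f x) -> 0 <= Rsum l f.
Proof.
  intros H; replace 0 with (Rsum l (fun _ => 0)) by (rewrite Rsum_const; ring).
  apply Rsum_le; auto.
Qed.

Lemma Rsum_nonneg_eq0 l f :
  (forall x, In x l -> 0 <= f x) -> Rsum l f = 0 -> forall x, In x l -> f x = 0.
Proof.
  induction l; simpl; intros H E x Hx; [contradiction |].
  assert (0 <= f a) by auto; assert (0 <= Rsum l f) by (apply Rsum_nonneg; auto).
  destruct Hx as [<- | Hx]; [lra | apply IHl; auto; lra].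
Qed.

Lemma Re_Csum l u : Re (Csum l u) = Rsum l (fun x => Re (u x)).
Proof. induction l; simpl; auto. rewrite IHl; auto. Qed.

Lemma Im_Csum l u : Im (Csum l u) = Rsum l (fun x => Im (u x)).
Proof. induction l; simpl; auto. rewrite IHl; auto. Qed.

Lemma Csum_ext l u v : (forall x, In x l -> u x = v x) -> Csum l u = Csum l v.
Proof. induction l; simpl; intros H; auto. rewrite H, IHl; auto. Qed.

Lemma Csum_app l1 l2 u : Csum (l1 ++ l2) u = Cadd (Csum l1 u) (Csum l2 u).
Proof. apply Cext; simpl; rewrite ?Re_Csum, ?Im_Csum, Rsum_app; auto. Qed.

Lemma Csum_plus l u v : Csum l (fun x => Cadd (u x) (v x)) = Cadd (Csum l u) (Csum l v).
Proof. apply Cext; simpl; rewrite ?Re_Csum, ?Im_Csum; simpl; rewrite Rsum_plus; auto. Qed.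

Lemma Csum_mull l c u : Cmul c (Csum l u) = Csum l (fun x => Cmul c (u x)).
Proof. induction l; simpl; [Cring |]. rewrite <- IHl; Cring. Qed.

Lemma Csum_mulr l c u : Cmul (Csum l u) c = Csum l (fun x => Cmul (u x) c).
Proof. rewrite Cmul_comm, Csum_mull; apply Csum_ext; intros; apply Cmul_comm. Qed.

Lemma Csum_const l z : Csum l (fun _ => z) = Cscale (INR (length l)) z.
Proof. apply Cext; simpl; rewrite ?Re_Csum, ?Im_Csum, Rsum_const; auto. Qed.

Lemma Csum_zero l : Csum l (fun _ => C0) = C0.
Proof. rewrite Csum_const; Cring. Qed.

End FiniteSums.

Section ReindexSums.
Context {X Y : Type}.

Lemma Rsum_map (h : X -> Y) l f : Rsum (map h l) f = Rsum l (fun x => f (h x)).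
Proof. induction l; simpl; auto. rewrite IHl; auto. Qed.

Lemma Csum_map (h : X -> Y) l u : Csum (map h l) u = Csum l (fun x => u (h x)).
Proof. induction l; simpl; auto. rewrite IHl; auto. Qed.

Lemma Cprod_map (h : X -> Y) l u : Cprod (map h l) u = Cprod l (fun x => u (h x)).
Proof. induction l; simpl; auto. rewrite IHl; auto. Qed.

Lemma Rsum_flat_map (h : X -> list Y) l f :
  Rsum (flat_map h l) f = Rsum l (fun x => Rsum (h x) f).
Proof. induction l; simpl; auto. rewrite Rsum_app, IHl; auto. Qed.

Lemma Csum_flat_map (h : X -> list Y) l u :
  Csum (flat_map h l) u = Csum l (fun x => Csum (h x) u).
Proof. induction l; simpl; auto. rewrite Csum_app, IHl; auto. Qed.

Lemma Rsum_swap (l1 : list X) (l2 : list Y) f :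
  Rsum l1 (fun x => Rsum l2 (f x)) = Rsum l2 (fun y => Rsum l1 (fun x => f x y)).
Proof.
  induction l1; simpl.
  - rewrite Rsum_const; ring.
  - rewrite IHl1, <- Rsum_plus; auto.
Qed.

Lemma Csum_swap (l1 : list X) (l2 : list Y) u :
  Csum l1 (fun x => Csum l2 (u x)) = Csum l2 (fun y => Csum l1 (fun x => u x y)).
Proof.
  induction l1; simpl.
  - rewrite Csum_zero; auto.
  - rewrite IHl1, <- Csum_plus; auto.
Qed.

End ReindexSums.

Lemma Csum_delta m j (u : nat -> C) : (j < m)%nat ->
  Csum (seq 0 m) (fun l => if Nat.eqb l j then u l else C0) = u j.
Proof.
  induction m; intros H; [lia |]. rewrite seq_S, Csum_app; simpl.
  destruct (Nat.eqb_spec m j) as [<- | Hne].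
  - rewrite (Csum_ext _ _ (fun _ => C0)), Csum_zero; [Cring |].
    intros l Hl; apply in_seq in Hl; destruct (Nat.eqb_spec l m); auto; lia.
  - rewrite IHm by lia; Cring.
Qed.

Definition nrm2 {X} (l : list X) (u : X -> C) : R := Rsum l (fun x => Cnorm2 (u x)).

Lemma vnorm_nrm2 n x : vnorm n x = sqrt (nrm2 (seq 0 n) x).
Proof. reflexivity. Qed.

Lemma tnorm_nrm2 n k v : tnorm n k v = sqrt (nrm2 (tuples n k) v).
Proof. reflexivity. Qed.

Lemma sqrt_eq1 x : 0 <= x -> sqrt x = 1 <-> x = 1.
Proof.
  intros Hx; split; intros H; [| rewrite H; apply sqrt_1].
  rewrite <- (sqrt_sqrt x Hx), H; ring.
Qed.

Lemma sqrt_le_mult_sqrt x c N : 0 <= x -> 0 <= c -> 0 <= N ->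
  x <= c * c * N -> sqrt x <= c * sqrt N.
Proof.
  intros; rewrite <- (sqrt_square c), <- sqrt_mult by nra; apply sqrt_le_1_alt; auto.
Qed.

Lemma le_mult_of_sqrt_le x c N : 0 <= x -> 0 <= N ->
  sqrt x <= c * sqrt N -> x <= c * c * N.
Proof.
  intros Hx HN H; pose proof (sqrt_sqrt x Hx); pose proof (sqrt_sqrt N HN); pose proof (sqrt_pos x).
  assert (sqrt x * sqrt x <= (c * sqrt N) * (c * sqrt N)) by nra; nra.
Qed.

Section EuclideanNorm.
Context {X : Type}.
Implicit Types (l : list X) (u v : X -> C).

Lemma nrm2_nonneg l u : 0 <= nrm2 l u.
Proof. apply Rsum_nonneg; intros; apply Cnorm2_nonneg. Qed.

Lemma nrm2_ext l u v : (forall x, In x l -> u x = v x) -> nrm2 l u = nrm2 l v.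
Proof. intros H; apply Rsum_ext; intros; rewrite H; auto. Qed.

Lemma nrm2_zero l : nrm2 l (fun _ => C0) = 0.
Proof. unfold nrm2, Cnorm2; simpl; rewrite Rsum_const; ring. Qed.

Lemma nrm2_mull l c u : nrm2 l (fun x => Cmul c (u x)) = Cnorm2 c * nrm2 l u.
Proof. unfold nrm2; rewrite <- Rsum_scal; apply Rsum_ext; intros; apply Cnorm2_mul. Qed.

Lemma nrm2_scale l c u : nrm2 l (fun x => Cscale c (u x)) = c * c * nrm2 l u.
Proof. unfold nrm2; rewrite <- Rsum_scal; apply Rsum_ext; intros; apply Cnorm2_scale. Qed.

Lemma nrm2_eq0 l u : nrm2 l u = 0 -> forall x, In x l -> u x = C0.
Proof.
  intros H x Hx; apply Cnorm2_eq0.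
  apply (Rsum_nonneg_eq0 l (fun x => Cnorm2 (u x))); auto; intros; apply Cnorm2_nonneg.
Qed.

Lemma Cauchy_Schwarz l (f1 f2 g1 g2 : X -> R) :
  (Rsum l (fun x => f1 x * g1 x + f2 x * g2 x)) ^ 2 <=
  Rsum l (fun x => f1 x * f1 x + f2 x * f2 x) * Rsum l (fun x => g1 x * g1 x + g2 x * g2 x).
Proof.
  set (A := Rsum l (fun x => f1 x * f1 x + f2 x * f2 x)).
  set (B := Rsum l (fun x => g1 x * g1 x + g2 x * g2 x)).
  set (S := Rsum l (fun x => f1 x * g1 x + f2 x * g2 x)).
  assert (Hquad : forall a b, 0 <= a * a * A + 2 * a * b * S + b * b * B).
  { intros a b.
    replace (a * a * A + 2 * a * b * S + b * b * B) with
      (Rsum l (fun x => (a * f1 x + b * g1 x) * (a * f1 x + b * g1 x)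
                        + (a * f2 x + b * g2 x) * (a * f2 x + b * g2 x))).
    - apply Rsum_nonneg; intros x _.
      pose proof (Rle_0_sqr (a * f1 x + b * g1 x)); pose proof (Rle_0_sqr (a * f2 x + b * g2 x)).
      unfold Rsqr in *; lra.
    - unfold A, B, S; rewrite <- !Rsum_scal, <- !Rsum_plus; apply Rsum_ext; intros; ring. }
  assert (HA : 0 <= A) by (apply Rsum_nonneg; intros; nra).
  assert (HB : 0 <= B) by (apply Rsum_nonneg; intros; nra).
  pose proof (Hquad B (- S)); pose proof (Hquad S (- A)).
  pose proof (Hquad 1 1); pose proof (Hquad 1 (-1)).
  destruct (Rle_lt_or_eq_dec 0 A HA) as [HA0 | HA0];
    [| destruct (Rle_lt_or_eq_dec 0 B HB) as [HB0 | HB0]].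
  - assert (0 <= A * B - S * S) by (apply (Rmult_le_reg_l A); nra); nra.
  - assert (0 <= A * B - S * S) by (apply (Rmult_le_reg_l B); nra); nra.
  - assert (HS : S = 0) by nra; rewrite HS, <- HA0, <- HB0; lra.
Qed.

Lemma nrm_triangle l u v :
  sqrt (nrm2 l (fun x => Cadd (u x) (v x))) <= sqrt (nrm2 l u) + sqrt (nrm2 l v).
Proof.
  unfold nrm2.
  rewrite (Rsum_ext _ _ (fun x => Cnorm2 (u x) + Cnorm2 (v x)
                                  + 2 * (Re (u x) * Re (v x) + Im (u x) * Im (v x))))
    by (intros; apply Cnorm2_add).
  rewrite !Rsum_plus, Rsum_scal.
  set (A := Rsum l (fun x => Cnorm2 (u x))).
  set (B := Rsum l (fun x => Cnorm2 (v x))).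
  set (S := Rsum l (fun x => Re (u x) * Re (v x) + Im (u x) * Im (v x))).
  assert (HCS : S ^ 2 <= A * B) by apply Cauchy_Schwarz.
  assert (HA : 0 <= A) by (apply Rsum_nonneg; intros; apply Cnorm2_nonneg).
  assert (HB : 0 <= B) by (apply Rsum_nonneg; intros; apply Cnorm2_nonneg).
  pose proof (sqrt_sqrt A HA); pose proof (sqrt_sqrt B HB).
  pose proof (sqrt_pos A); pose proof (sqrt_pos B).
  assert (HS : S <= sqrt A * sqrt B).
  { destruct (Rle_or_lt S 0); [nra |].
    apply Rsqr_incr_0_var; unfold Rsqr; nra. }
  rewrite <- (sqrt_square (sqrt A + sqrt B)) by lra.
  apply sqrt_le_1_alt; nra.
Qed.

Lemma nrm_Csum {Y} l (P : list Y) (u : Y -> X -> C) :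
  sqrt (nrm2 l (fun x => Csum P (fun p => u p x))) <= Rsum P (fun p => sqrt (nrm2 l (u p))).
Proof.
  induction P; simpl.
  - rewrite nrm2_zero, sqrt_0; lra.
  - eapply Rle_trans; [apply nrm_triangle | lra].
Qed.

End EuclideanNorm.

Definition opnorm_le (n : nat) (M : Mat) (a : R) : Prop :=
  0 <= a /\ forall y, nrm2 (seq 0 n) (matvec n M y) <= a * a * nrm2 (seq 0 n) y.

Definition topnorm_le (n k : nat) (E : TMat) (c : R) : Prop :=
  0 <= c /\ forall v, nrm2 (tuples n k) (tmatvec n k E v) <= c * c * nrm2 (tuples n k) v.

Lemma In_tuples_S n k I :
  In I (tuples n (S k)) <-> exists i I', I = i :: I' /\ (i < n)%nat /\ In I' (tuples n k).
Proof.
  simpl; rewrite in_flat_map; split.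
  - intros [i [Hi HI]]; apply in_map_iff in HI; destruct HI as [I' [<- HI']].
    apply in_seq in Hi; exists i, I'; repeat split; auto; lia.
  - intros [i [I' [-> [Hi HI']]]]; exists i; split; [apply in_seq; lia | apply in_map; auto].
Qed.

Lemma tuples_length n k I : In I (tuples n k) -> length I = k.
Proof.
  revert I; induction k; intros I H.
  - destruct H as [<- | []]; auto.
  - apply In_tuples_S in H; destruct H as [i [I' [-> [_ H]]]]; simpl; f_equal; auto.
Qed.

Lemma nrm2_tuples_S n k u :
  nrm2 (tuples n (S k)) u = Rsum (seq 0 n) (fun i => nrm2 (tuples n k) (fun I => u (i :: I))).
Proof. unfold nrm2; simpl tuples; rewrite Rsum_flat_map; apply Rsum_ext; intros; rewrite Rsum_map; reflexivity. Qed.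

Lemma tmatvec_S n k (E : TMat) v I :
  tmatvec n (S k) E v I =
  Csum (seq 0 n) (fun j => Csum (tuples n k) (fun J => Cmul (E I (j :: J)) (v (j :: J)))).
Proof. unfold tmatvec; simpl tuples; rewrite Csum_flat_map; apply Csum_ext; intros; rewrite Csum_map; reflexivity. Qed.

(* [kron_apply n k M E v] is [(M (x) E) v] for [v] in the [(k+1)]-fold tensor power. *)
Definition kron_apply (n k : nat) (M : Mat) (E : TMat) (v : list nat -> C) (I : list nat) : C :=
  match I with
  | i :: I' => Csum (seq 0 n) (fun j => Cmul (M i j) (tmatvec n k E (fun J => v (j :: J)) I'))
  | [] => C0
  end.

Lemma kron_apply_norm_le n k M E v a c : opnorm_le n M a -> topnorm_le n k E c ->
  nrm2 (tuples n (S k)) (kron_apply n k M E v) <= (a * c) * (a * c) * nrm2 (tuples n (S k)) v.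
Proof.
  intros [Ha HM] [Hc HE].
  rewrite !nrm2_tuples_S; simpl kron_apply.
  set (y := fun I j => tmatvec n k E (fun J => v (j :: J)) I).
  change (Rsum (seq 0 n) (fun i => nrm2 (tuples n k) (fun I => matvec n M (y I) i)) <=
          a * c * (a * c) * Rsum (seq 0 n) (fun i => nrm2 (tuples n k) (fun I => v (i :: I)))).
  unfold nrm2; rewrite Rsum_swap.
  apply Rle_trans with (Rsum (tuples n k) (fun I => a * a * nrm2 (seq 0 n) (y I))).
  { apply Rsum_le; intros; apply HM. }
  rewrite Rsum_scal; unfold nrm2; rewrite Rsum_swap.
  apply Rle_trans with
    (a * a * Rsum (seq 0 n) (fun j => c * c * nrm2 (tuples n k) (fun I => v (j :: I)))).
  - apply Rmult_le_compat_l; [nra |]; apply Rsum_le; intros; apply HE.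
  - rewrite Rsum_scal; right; unfold nrm2; ring.
Qed.

Fixpoint picks (L : list nat) : list (nat * list nat) :=
  match L with
  | [] => []
  | a :: L' => (a, L') :: map (fun p => (fst p, a :: snd p)) (picks L')
  end.

Lemma picks_length L : length (picks L) = length L.
Proof. induction L; simpl; auto; rewrite length_map; auto. Qed.

Lemma In_picks L p : In p (picks L) ->
  In (fst p) L /\ (forall x, In x (snd p) -> In x L) /\ length (snd p) = pred (length L).
Proof.
  revert p; induction L; simpl; intros p H; [contradiction |].
  destruct H as [<- | H]; simpl; [repeat split; auto |].
  apply in_map_iff in H; destruct H as [q [<- Hq]].
  destruct (IHL q Hq) as [H1 [H2 H3]]; simpl; repeat split; auto.
  - intros x [<- | Hx]; auto.
  - rewrite H3; destruct L; simpl in *; [contradiction | auto].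
Qed.

(* Entry [(I, J)] of the sum, over all ways of putting the matrices [Xs l] (l in [L]) into
   distinct tensor slots, of the tensor product having [M] in every other slot. *)
Fixpoint dtensor (M : Mat) (Xs : nat -> Mat) (L : list nat) (I J : list nat) {struct I} : C :=
  match I, J with
  | [], [] => match L with [] => C1 | _ => C0 end
  | i :: I', j :: J' =>
      Cadd (Cmul (M i j) (dtensor M Xs L I' J'))
           (Csum (picks L) (fun p => Cmul (Xs (fst p) i j) (dtensor M Xs (snd p) I' J')))
  | _, _ => C0
  end.

Lemma tmatvec_dtensor_S n k M Xs L v i I :
  tmatvec n (S k) (dtensor M Xs L) v (i :: I) =
  Cadd (kron_apply n k M (dtensor M Xs L) v (i :: I))
       (Csum (picks L) (fun p => kron_apply n k (Xs (fst p)) (dtensor M Xs (snd p)) v (i :: I))).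
Proof.
  rewrite tmatvec_S; unfold kron_apply, tmatvec.
  rewrite <- (Csum_swap (seq 0 n) (picks L)), <- Csum_plus; apply Csum_ext; intros j _.
  transitivity (Csum (tuples n k) (fun J =>
    Cadd (Cmul (M i j) (Cmul (dtensor M Xs L I J) (v (j :: J))))
         (Csum (picks L) (fun p => Cmul (Xs (fst p) i j)
                                        (Cmul (dtensor M Xs (snd p) I J) (v (j :: J))))))).
  - apply Csum_ext; intros J _; simpl dtensor.
    rewrite Cmul_addl, Csum_mulr, Cmul_assoc; f_equal.
    apply Csum_ext; intros; apply Cmul_assoc.
  - rewrite Csum_plus, Csum_mull, Csum_swap; f_equal.
    apply Csum_ext; intros; rewrite Csum_mull; reflexivity.
Qed.

Fixpoint dcoef (a : R) (k s : nat) : R :=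
  match k with
  | O => match s with O => 1 | _ => 0 end
  | S k' => a * dcoef a k' s + INR s * dcoef a k' (pred s)
  end.

Lemma dcoef_nonneg a k s : 0 <= a -> 0 <= dcoef a k s.
Proof.
  intros Ha; revert s; induction k; intros s; simpl; [destruct s; lra |].
  pose proof (IHk s); pose proof (IHk (pred s)); pose proof (pos_INR s); nra.
Qed.

Lemma dcoef_gt a k s : (k < s)%nat -> dcoef a k s = 0.
Proof.
  revert s; induction k; intros s H; simpl; [destruct s; [lia | auto] |].
  rewrite !IHk by lia; ring.
Qed.

Lemma dcoef_closed a k s : (s <= k)%nat ->
  dcoef a k s = INR (fact k) / INR (fact (k - s)) * a ^ (k - s).
Proof.
  revert s; induction k; intros s H.
  - replace s with 0%nat by lia; simpl; field.
  - pose proof (INR_fact_neq_0 k); pose proof (pos_INR k); cbn [dcoef].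
    destruct s as [| s]; [| destruct (Nat.eq_dec s k) as [-> | Hne]].
    + rewrite IHk, !Nat.sub_0_r by lia; simpl pred.
      change (fact (S k)) with (S k * fact k)%nat; rewrite mult_INR, S_INR; simpl pow.
      replace (INR 0) with 0 by reflexivity; field; split; auto; lra.
    + rewrite dcoef_gt, IHk, !Nat.sub_diag by lia; simpl pred.
      change (fact (S k)) with (S k * fact k)%nat; rewrite mult_INR, S_INR; simpl; field; lra.
    + destruct (Nat.le_exists_sub (S s) k ltac:(lia)) as [d [Hd _]].
      rewrite !IHk by lia; simpl pred.
      replace (k - S s)%nat with d by lia; replace (k - s)%nat with (S d) by lia.
      replace (S k - S s)%nat with (S d) by lia.
      pose proof (INR_fact_neq_0 d); pose proof (pos_INR d).
      change (fact (S d)) with (S d * fact d)%nat; change (fact (S k)) with (S k * fact k)%nat.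
      rewrite !mult_INR; simpl pow.
      assert (Hk : INR k = INR d + INR s + 1) by (rewrite Hd, plus_INR, S_INR; ring).
      rewrite !S_INR, Hk; field; lra.
Qed.

Lemma dcoef_continuous k s : continuity (fun a => dcoef a k s).
Proof.
  revert s; induction k; intros s; simpl.
  - apply continuity_const; intros x y; reflexivity.
  - apply (continuity_plus (fun a => a * dcoef a k s) (fun a => INR s * dcoef a k (pred s))).
    + apply (continuity_mult id); auto; apply derivable_continuous, derivable_id.
    + apply (continuity_scal (fun a => dcoef a k (pred s))); auto.
Qed.

(* Splitting off the first slot: either [M] sits there, or one of the [Xs l]; hence the recursion
   of [dcoef]. *)
Lemma dtensor_norm_le n a M Xs k L : opnorm_le n M a ->
  (forall l, In l L -> opnorm_le n (Xs l) 1) ->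
  topnorm_le n k (dtensor M Xs L) (dcoef a k (length L)).
Proof.
  intros HM; revert L; induction k; intros L HL.
  - split; [destruct L; simpl; lra |]; intros v; unfold nrm2, tmatvec; simpl.
    destruct L; simpl; unfold Cnorm2; simpl; nra.
  - assert (Ha : 0 <= a) by apply HM.
    split; [apply dcoef_nonneg; auto |]; intros v.
    set (N := nrm2 (tuples n (S k)) v); assert (HN : 0 <= N) by apply nrm2_nonneg.
    apply le_mult_of_sqrt_le; [apply nrm2_nonneg | auto |].
    rewrite (nrm2_ext _ _ (fun I => Cadd (kron_apply n k M (dtensor M Xs L) v I)
        (Csum (picks L) (fun p => kron_apply n k (Xs (fst p)) (dtensor M Xs (snd p)) v I)))).
    2: { intros I HI; apply In_tuples_S in HI; destruct HI as [i [I' [-> _]]].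
         apply tmatvec_dtensor_S. }
    eapply Rle_trans; [apply nrm_triangle |].
    eapply Rle_trans; [apply Rplus_le_compat_l, nrm_Csum |].
    assert (HMslot : sqrt (nrm2 (tuples n (S k)) (kron_apply n k M (dtensor M Xs L) v))
                     <= a * dcoef a k (length L) * sqrt N).
    { pose proof (dcoef_nonneg a k (length L) Ha).
      apply sqrt_le_mult_sqrt; [apply nrm2_nonneg | nra | auto |].
      apply kron_apply_norm_le; auto. }
    assert (HXslot : Rsum (picks L) (fun p =>
        sqrt (nrm2 (tuples n (S k)) (kron_apply n k (Xs (fst p)) (dtensor M Xs (snd p)) v)))
        <= Rsum (picks L) (fun _ => dcoef a k (pred (length L)) * sqrt N)).
    { apply Rsum_le; intros p Hp; destruct (In_picks L p Hp) as [Hfst [Hsnd Hlen]].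
      apply sqrt_le_mult_sqrt; [apply nrm2_nonneg | apply dcoef_nonneg; auto | auto |].
      rewrite <- Hlen, <- (Rmult_1_l (dcoef a k (length (snd p)))).
      apply kron_apply_norm_le; auto. }
    rewrite Rsum_const, picks_length in HXslot; simpl dcoef.
    rewrite Rmult_plus_distr_r, (Rmult_assoc (INR (length L))).
    apply Rplus_le_compat; [exact HMslot | exact HXslot].
Qed.

Definition is_partial_C (j : nat) (F F' : (nat -> R) -> C) : Prop :=
  forall t, derivable_pt_lim (fun s => Re (F (upd t j s))) (t j) (Re (F' t)) /\
            derivable_pt_lim (fun s => Im (F (upd t j s))) (t j) (Im (F' t)).

Lemma upd_same t j : upd t j (t j) = t.
Proof.
  apply functional_extensionality; intros i; unfold upd.
  destruct (Nat.eqb_spec i j); subst; auto.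
Qed.

Lemma derivable_pt_lim_eq f x l1 l2 : l1 = l2 -> derivable_pt_lim f x l1 -> derivable_pt_lim f x l2.
Proof. intros ->; auto. Qed.

Lemma is_partial_C_ext j F F' G' : (forall t, F' t = G' t) ->
  is_partial_C j F F' -> is_partial_C j F G'.
Proof. intros E H t; rewrite <- E; apply H. Qed.

Lemma is_partial_C_const j z : is_partial_C j (fun _ => z) (fun _ => C0).
Proof. intros t; split; apply derivable_pt_lim_const. Qed.

Lemma is_partial_C_add j F F' G G' : is_partial_C j F F' -> is_partial_C j G G' ->
  is_partial_C j (fun t => Cadd (F t) (G t)) (fun t => Cadd (F' t) (G' t)).
Proof.
  intros HF HG t; destruct (HF t), (HG t).
  split; apply (derivable_pt_lim_plus (fun s => _ (_ (upd t j s))) (fun s => _ (_ (upd t j s)))); auto.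
Qed.

Lemma is_partial_C_mul j F F' G G' : is_partial_C j F F' -> is_partial_C j G G' ->
  is_partial_C j (fun t => Cmul (F t) (G t))
                 (fun t => Cadd (Cmul (F' t) (G t)) (Cmul (F t) (G' t))).
Proof.
  intros HF HG t; destruct (HF t) as [F1 F2], (HG t) as [G1 G2]; simpl; split.
  - eapply derivable_pt_lim_eq;
      [| apply derivable_pt_lim_minus; apply derivable_pt_lim_mult; eauto].
    cbv beta; rewrite !upd_same; ring.
  - eapply derivable_pt_lim_eq;
      [| apply derivable_pt_lim_plus; apply derivable_pt_lim_mult; eauto].
    cbv beta; rewrite !upd_same; ring.
Qed.

Lemma is_partial_C_Csum {X} j (l : list X) F F' :
  (forall x, In x l -> is_partial_C j (F x) (F' x)) ->
  is_partial_C j (fun t => Csum l (fun x => F x t)) (fun t => Csum l (fun x => F' x t)).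
Proof.
  induction l; simpl; intros H; [apply is_partial_C_const |].
  apply is_partial_C_add; auto.
Qed.

Lemma is_partial_C_coord_scale j l z :
  is_partial_C j (fun t => Cscale (t l) z) (fun _ => if Nat.eqb l j then z else C0).
Proof.
  intros t; unfold upd; simpl; destruct (Nat.eqb_spec l j).
  - split; (eapply derivable_pt_lim_eq;
      [| apply derivable_pt_lim_mult; [apply derivable_pt_lim_id | apply derivable_pt_lim_const]]);
      cbv beta; ring.
  - split; apply derivable_pt_lim_const.
Qed.

Lemma is_partial_C_perturb m A Xs j a b : (j < m)%nat ->
  is_partial_C j (fun t => perturb m A Xs t a b) (fun _ => Xs j a b).
Proof.
  intros Hj; unfold perturb.
  eapply is_partial_C_ext;
    [| apply is_partial_C_add;
         [apply is_partial_C_const | apply (is_partial_C_Csum j (seq 0 m)); intros; apply is_partial_C_coord_scale]].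
  intros t; simpl; rewrite (Csum_delta m j (fun l => Xs l a b)) by auto; Cring.
Qed.

Lemma is_partial_C_dtensor m A Xs j I J L : (j < m)%nat ->
  is_partial_C j (fun t => dtensor (perturb m A Xs t) Xs L I J)
                 (fun t => dtensor (perturb m A Xs t) Xs (j :: L) I J).
Proof.
  intros Hj; revert J L; induction I as [| i I IH]; intros J L.
  - destruct J, L; simpl; apply is_partial_C_const.
  - destruct J as [| j' J]; simpl; [apply is_partial_C_const |].
    eapply is_partial_C_ext;
      [| apply is_partial_C_add;
           [apply is_partial_C_mul; [apply is_partial_C_perturb; auto | apply IH] |
            apply (is_partial_C_Csum j (picks L)); intros p _;
            apply (is_partial_C_mul j (fun _ => Xs (fst p) i j') (fun _ => C0));
              [apply is_partial_C_const | apply IH]]].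
    intros t; simpl; rewrite Csum_map.
    rewrite (Csum_ext (picks L) _ (fun p => Cmul (Xs (fst p) i j')
                                       (dtensor (perturb m A Xs t) Xs (j :: snd p) I J)))
      by (intros; Cring).
    Cring.
Qed.

Lemma partial_unique j (f g : (nat -> R) -> R) :
  (forall t, derivable_pt_lim (fun s => f (upd t j s)) (t j) (g t)) -> partial j f = g.
Proof.
  intros H; apply functional_extensionality; intros t; unfold partial.
  eapply uniqueness_limite; [| apply H].
  apply (epsilon_spec (inhabits 0) (fun l => derivable_pt_lim (fun s => f (upd t j s)) (t j) l)).
  exists (g t); apply H.
Qed.

Lemma iter_partial_dtensor m A Xs I J m' : (m' <= m)%nat ->
  iter_partial m' (fun t => Re (dtensor (perturb m A Xs t) Xs [] I J)) =
    (fun t => Re (dtensor (perturb m A Xs t) Xs (rev (seq 0 m')) I J)) /\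
  iter_partial m' (fun t => Im (dtensor (perturb m A Xs t) Xs [] I J)) =
    (fun t => Im (dtensor (perturb m A Xs t) Xs (rev (seq 0 m')) I J)).
Proof.
  induction m'; intros H; [split; reflexivity |]; cbn [iter_partial].
  destruct IHm' as [-> ->]; [lia |].
  rewrite seq_S, rev_app_distr; simpl.
  split; apply partial_unique; intros t; apply (is_partial_C_dtensor m A Xs m' I J _ ltac:(lia) t).
Qed.

Lemma tensor_pow_dtensor M Xs I J : length I = length J ->
  tensor_pow (length I) M I J = dtensor M Xs [] I J.
Proof.
  revert J; induction I as [| i I IH]; intros J HJ; destruct J as [| j J];
    simpl in *; try discriminate; [reflexivity |].
  unfold tensor_pow in *; simpl; rewrite <- seq_shift, Cprod_map; simpl.
  rewrite IH by lia; Cring.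
Qed.

Lemma perturb_zero m A Xs : perturb m A Xs (fun _ => 0) = A.
Proof.
  apply functional_extensionality; intros i; apply functional_extensionality; intros j.
  unfold perturb; apply Cext; simpl; rewrite ?Re_Csum, ?Im_Csum; simpl;
    rewrite (Rsum_ext _ _ (fun _ => 0)), Rsum_const by (intros; ring); ring.
Qed.

Lemma D_sympow_dtensor m k A Xs I J : length I = k -> length J = k ->
  D_sympow m k A Xs I J = dtensor A Xs (rev (seq 0 m)) I J.
Proof.
  intros HI HJ; unfold D_sympow.
  replace (fun t => tensor_pow k (perturb m A Xs t) I J)
    with (fun t => dtensor (perturb m A Xs t) Xs [] I J)
    by (apply functional_extensionality; intros t; subst k; symmetry;
        apply tensor_pow_dtensor; congruence).
  unfold mixed_deriv_at0; destruct (iter_partial_dtensor m A Xs I J m (le_n m)) as [-> ->].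
  rewrite perturb_zero; destruct (dtensor A Xs (rev (seq 0 m)) I J); reflexivity.
Qed.

Lemma tmatvec_D_sympow n m k A Xs v I : In I (tuples n k) ->
  tmatvec n k (D_sympow m k A Xs) v I = tmatvec n k (dtensor A Xs (rev (seq 0 m))) v I.
Proof.
  intros HI; apply Csum_ext; intros J HJ.
  rewrite D_sympow_dtensor; eauto using tuples_length.
Qed.

Lemma D_sympow_norm_le n m k A Xs a : opnorm_le n A a ->
  (forall l, (l < m)%nat -> opnorm_le n (Xs l) 1) ->
  forall v, tnorm n k (tmatvec n k (D_sympow m k A Xs) v) <= dcoef a k m * tnorm n k v.
Proof.
  intros HA HX v; rewrite !tnorm_nrm2.
  rewrite (nrm2_ext _ _ (tmatvec n k (dtensor A Xs (rev (seq 0 m))) v))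
    by (intros; apply tmatvec_D_sympow; auto).
  destruct (dtensor_norm_le n a A Xs k (rev (seq 0 m)) HA) as [Hc Hb].
  { intros l Hl; apply HX; apply in_rev, in_seq in Hl; lia. }
  rewrite length_rev, length_seq in Hc, Hb.
  apply sqrt_le_mult_sqrt; auto; apply nrm2_nonneg.
Qed.

Lemma matvec_scale n M c y i :
  matvec n M (fun j => Cscale c (y j)) i = Cscale c (matvec n M y i).
Proof.
  unfold matvec; apply Cext; simpl; rewrite ?Re_Csum, ?Im_Csum, <- ?Rsum_scal;
    apply Rsum_ext; intros; simpl; ring.
Qed.

Lemma nrm2_normalize {X} (l : list X) y : 0 < nrm2 l y ->
  nrm2 l (fun j => Cscale (/ sqrt (nrm2 l y)) (y j)) = 1.
Proof.
  intros Hy; rewrite nrm2_scale, <- Rinv_mult, sqrt_sqrt by lra; field; lra.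
Qed.

Lemma is_opnorm_ub n M a x : is_opnorm n M a -> nrm2 (seq 0 n) x = 1 ->
  nrm2 (seq 0 n) (matvec n M x) <= a * a.
Proof.
  intros [Hub _] Hx.
  assert (Ha : sqrt (nrm2 (seq 0 n) (matvec n M x)) <= a).
  { apply Hub; exists x; split; [rewrite vnorm_nrm2, Hx; apply sqrt_1 | reflexivity]. }
  rewrite <- (Rmult_1_r (a * a)).
  apply le_mult_of_sqrt_le; [apply nrm2_nonneg | lra |]; rewrite sqrt_1; lra.
Qed.

Definition e0 : nat -> C := fun j => if Nat.eqb j 0 then C1 else C0.

Lemma nrm2_e0 n : (1 <= n)%nat -> nrm2 (seq 0 n) e0 = 1.
Proof.
  intros H; destruct n as [| n]; [lia |]; unfold nrm2; simpl.
  rewrite (Rsum_ext _ _ (fun _ => 0)), Rsum_const; [unfold e0, Cnorm2; simpl; ring |].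
  intros j Hj; apply in_seq in Hj; unfold e0.
  destruct (Nat.eqb_spec j 0); [lia | unfold Cnorm2; simpl; ring].
Qed.

Lemma is_opnorm_nonneg n M a : (1 <= n)%nat -> is_opnorm n M a -> 0 <= a.
Proof.
  intros Hn [Hub _]; apply Rle_trans with (vnorm n (matvec n M e0)); [apply sqrt_pos |].
  apply Hub; exists e0; split; [rewrite vnorm_nrm2, nrm2_e0; auto; apply sqrt_1 | reflexivity].
Qed.

Lemma is_opnorm_le n M a : (1 <= n)%nat -> is_opnorm n M a -> opnorm_le n M a.
Proof.
  intros Hn HM; split; [eapply is_opnorm_nonneg; eauto |]; intros y.
  set (r := nrm2 (seq 0 n) y); assert (Hr : 0 <= r) by apply nrm2_nonneg.
  destruct (Rle_lt_or_eq_dec 0 r Hr) as [Hr0 | Hr0].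
  - pose proof (is_opnorm_ub n M a _ HM (nrm2_normalize _ y Hr0)) as Hz.
    unfold nrm2 in Hz; rewrite (Rsum_ext _ _ (fun i => / r * Cnorm2 (matvec n M y i))) in Hz.
    + rewrite Rsum_scal in Hz; fold (nrm2 (seq 0 n) (matvec n M y)) in Hz.
      apply (Rmult_le_reg_l (/ r)); [apply Rinv_0_lt_compat; auto |].
      replace (/ r * (a * a * r)) with (a * a) by (field; lra); auto.
    + intros i _; rewrite matvec_scale, Cnorm2_scale, <- Rinv_mult, sqrt_sqrt; auto.
  - rewrite (nrm2_ext _ _ (fun _ => C0)), nrm2_zero; [fold r; rewrite <- Hr0; lra |].
    intros i _; unfold matvec; rewrite (Csum_ext _ _ (fun _ => C0)), Csum_zero; auto.
    intros j Hj; rewrite (nrm2_eq0 _ y (eq_sym Hr0) j Hj); Cring.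
Qed.

Fixpoint ptensor (x : nat -> C) (I : list nat) : C :=
  match I with [] => C1 | i :: I' => Cmul (x i) (ptensor x I') end.

Lemma ptensor_perm x I J : Permutation I J -> ptensor x I = ptensor x J.
Proof. induction 1; simpl; [reflexivity | congruence | Cring | congruence]. Qed.

Lemma ptensor_symmetric n k x : symmetric_tensor n k (ptensor x).
Proof. intros I J _; apply ptensor_perm. Qed.

Lemma nrm2_ptensor n k x : nrm2 (tuples n k) (ptensor x) = nrm2 (seq 0 n) x ^ k.
Proof.
  induction k; [unfold nrm2, Cnorm2; simpl; ring |].
  rewrite nrm2_tuples_S; simpl ptensor.
  rewrite (Rsum_ext _ _ (fun i => Cnorm2 (x i) * nrm2 (tuples n k) (ptensor x)))
    by (intros; apply nrm2_mull).
  rewrite IHk, (Rsum_ext _ _ (fun i => nrm2 (seq 0 n) x ^ k * Cnorm2 (x i))) by (intros; ring).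
  rewrite Rsum_scal; simpl pow; unfold nrm2; ring.
Qed.

Definition Cconj (z : C) : C := mkC (Re z) (- Im z).

Definition cinner (n : nat) (x y : nat -> C) : C :=
  Csum (seq 0 n) (fun j => Cmul (Cconj (x j)) (y j)).

Lemma cinner_self n x : nrm2 (seq 0 n) x = 1 -> cinner n x x = C1.
Proof.
  intros H; apply Cext; unfold cinner; simpl; [rewrite Re_Csum | rewrite Im_Csum].
  - rewrite <- H; apply Rsum_ext; intros; unfold Cnorm2; simpl; ring.
  - rewrite (Rsum_ext _ _ (fun _ => 0)), Rsum_const by (intros; simpl; ring); ring.
Qed.

(* Cauchy-Schwarz applied to [conj(c) x] and [y], where [c] is the inner product itself. *)
Lemma cinner_Cauchy_Schwarz n x y :
  Cnorm2 (cinner n x y) <= nrm2 (seq 0 n) x * nrm2 (seq 0 n) y.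
Proof.
  set (a := Re (cinner n x y)); set (b := Im (cinner n x y)).
  assert (Ha : a = Rsum (seq 0 n) (fun j => Re (x j) * Re (y j) + Im (x j) * Im (y j)))
    by (unfold a, cinner; rewrite Re_Csum; apply Rsum_ext; intros; simpl; ring).
  assert (Hb : b = Rsum (seq 0 n) (fun j => Re (x j) * Im (y j) - Im (x j) * Re (y j)))
    by (unfold b, cinner; rewrite Im_Csum; apply Rsum_ext; intros; simpl; ring).
  pose proof (Cauchy_Schwarz (seq 0 n)
    (fun j => a * Re (x j) - b * Im (x j)) (fun j => a * Im (x j) + b * Re (x j))
    (fun j => Re (y j)) (fun j => Im (y j))) as HCS; cbv beta in HCS.
  replace (Rsum _ (fun j => (a * Re (x j) - b * Im (x j)) * Re (y j)
                            + (a * Im (x j) + b * Re (x j)) * Im (y j)))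
    with (a * a + b * b) in HCS
    by (rewrite Ha at 2; rewrite Hb at 2; rewrite <- !Rsum_scal, <- Rsum_plus;
        apply Rsum_ext; intros; ring).
  replace (Rsum _ (fun j => (a * Re (x j) - b * Im (x j)) * (a * Re (x j) - b * Im (x j))
                            + (a * Im (x j) + b * Re (x j)) * (a * Im (x j) + b * Re (x j))))
    with ((a * a + b * b) * nrm2 (seq 0 n) x) in HCS
    by (unfold nrm2; rewrite <- Rsum_scal; apply Rsum_ext; intros; unfold Cnorm2; ring).
  change (Rsum _ _) with (nrm2 (seq 0 n) y) in HCS.
  change (Cnorm2 (cinner n x y)) with (a * a + b * b).
  pose proof (nrm2_nonneg (seq 0 n) x); pose proof (nrm2_nonneg (seq 0 n) y).
  destruct (Rle_lt_or_eq_dec 0 (a * a + b * b)) as [Hp | Hp]; [nra | | rewrite <- Hp; nra].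
  apply (Rmult_le_reg_l (a * a + b * b)); auto; nra.
Qed.

Definition rank_one (w x : nat -> C) : Mat := fun i j => Cmul (w i) (Cconj (x j)).

Lemma matvec_rank_one n w x y i : matvec n (rank_one w x) y i = Cmul (w i) (cinner n x y).
Proof. unfold matvec, rank_one, cinner; rewrite Csum_mull; apply Csum_ext; intros; apply Cmul_assoc. Qed.

Lemma is_opnorm_rank_one n w x : nrm2 (seq 0 n) w = 1 -> nrm2 (seq 0 n) x = 1 ->
  is_opnorm n (rank_one w x) 1.
Proof.
  intros Hw Hx; split.
  - intros s [y [Hy ->]]; rewrite vnorm_nrm2, sqrt_eq1 in Hy by apply nrm2_nonneg.
    rewrite vnorm_nrm2, <- sqrt_1; apply sqrt_le_1_alt.
    rewrite (nrm2_ext _ _ (fun i => Cmul (cinner n x y) (w i)))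
      by (intros; rewrite matvec_rank_one; apply Cmul_comm).
    rewrite nrm2_mull, Hw; pose proof (cinner_Cauchy_Schwarz n x y); rewrite Hx, Hy in *; lra.
  - intros b Hb; apply Hb; exists x; rewrite !vnorm_nrm2, Hx, sqrt_1; split; auto.
    rewrite (nrm2_ext _ _ w), Hw, sqrt_1; auto.
    intros; rewrite matvec_rank_one, cinner_self by auto; Cring.
Qed.

Lemma kron_apply_ptensor n k M E x i I :
  kron_apply n k M E (ptensor x) (i :: I) = Cmul (matvec n M x i) (tmatvec n k E (ptensor x) I).
Proof.
  unfold kron_apply, matvec; rewrite Csum_mulr; apply Csum_ext; intros j _.
  rewrite Cmul_assoc; f_equal; unfold tmatvec; simpl ptensor; rewrite Csum_mull.
  apply Csum_ext; intros; Cring.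
Qed.

(* With every [Xs l] equal to [w x^*] and [A x = mu w], each slot maps [x] to a multiple of [w]. *)
Lemma dtensor_ptensor n A x w mu : nrm2 (seq 0 n) x = 1 ->
  (forall i, (i < n)%nat -> matvec n A x i = Cscale mu (w i)) ->
  forall k L I, In I (tuples n k) ->
  tmatvec n k (dtensor A (fun _ => rank_one w x) L) (ptensor x) I
  = Cscale (dcoef mu k (length L)) (ptensor w I).
Proof.
  intros Hx HA k; induction k; intros L I HI.
  - destruct HI as [<- | []]; unfold tmatvec; simpl; destruct L; Cring.
  - apply In_tuples_S in HI; destruct HI as [i [I' [-> [Hi HI']]]].
    rewrite tmatvec_dtensor_S, kron_apply_ptensor, IHk, HA by auto.
    rewrite (Csum_ext _ _ (fun _ => Cmul (w i) (Cscale (dcoef mu k (pred (length L))) (ptensor w I')))).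
    + rewrite Csum_const, picks_length; Cring.
    + intros p Hp; rewrite kron_apply_ptensor, IHk, matvec_rank_one, cinner_self by auto.
      destruct (In_picks L p Hp) as [_ [_ ->]]; Cring.
Qed.

Lemma matvec_unit_direction n A x : nrm2 (seq 0 n) x = 1 -> exists w, nrm2 (seq 0 n) w = 1 /\
  forall i, (i < n)%nat -> matvec n A x i = Cscale (vnorm n (matvec n A x)) (w i).
Proof.
  intros Hx; set (y := matvec n A x); rewrite vnorm_nrm2.
  destruct (Rle_lt_or_eq_dec 0 (nrm2 (seq 0 n) y) (nrm2_nonneg _ y)) as [Hy | Hy].
  - exists (fun j => Cscale (/ sqrt (nrm2 (seq 0 n) y)) (y j)).
    split; [apply nrm2_normalize; auto |].
    pose proof (sqrt_lt_R0 _ Hy); intros i _; apply Cext; simpl; field; lra.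
  - exists x; split; auto; intros i Hi.
    rewrite <- Hy, sqrt_0, (nrm2_eq0 _ y (eq_sym Hy)) by (apply in_seq; lia); Cring.
Qed.

Lemma is_sym_opnorm_exists n k E c v : symmetric_tensor n k v -> tnorm n k v = 1 ->
  (forall u, tnorm n k (tmatvec n k E u) <= c * tnorm n k u) ->
  exists s, is_sym_opnorm n k E s /\ tnorm n k (tmatvec n k E v) <= s.
Proof.
  intros Hv Hv1 HE.
  set (S := fun s => exists u, symmetric_tensor n k u /\ tnorm n k u = 1 /\
                               s = tnorm n k (tmatvec n k E u)).
  assert (HSv : S (tnorm n k (tmatvec n k E v))) by (exists v; auto).
  destruct (completeness S) as [s Hs].
  - exists c; intros s [u [_ [Hu ->]]]; rewrite <- (Rmult_1_r c), <- Hu; apply HE.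
  - eauto.
  - exists s; split; [exact Hs | apply Hs; exact HSv].
Qed.

(* The lower bound, witnessed by [X^l := w x^*] and the symmetric tensor [x (x) ... (x) x]. *)
Lemma dcoef_le_D_sympow_norm_ub n m k A a x b : (1 <= n)%nat -> is_opnorm n A a ->
  nrm2 (seq 0 n) x = 1 ->
  (forall s, (exists Xs : nat -> Mat, (forall l, (l < m)%nat -> is_opnorm n (Xs l) 1) /\
                                       is_sym_opnorm n k (D_sympow m k A Xs) s) -> s <= b) ->
  dcoef (vnorm n (matvec n A x)) k m <= b.
Proof.
  intros Hn HA Hx Hb.
  set (mu := vnorm n (matvec n A x)); assert (Hmu : 0 <= mu) by apply sqrt_pos.
  destruct (matvec_unit_direction n A x Hx) as [w [Hw HAx]].
  set (Xs := fun _ : nat => rank_one w x).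
  assert (HXs : forall l, (l < m)%nat -> is_opnorm n (Xs l) 1)
    by (intros; apply is_opnorm_rank_one; auto).
  assert (Hx1 : tnorm n k (ptensor x) = 1)
    by (rewrite tnorm_nrm2, nrm2_ptensor, Hx, pow1; apply sqrt_1).
  assert (Hval : tnorm n k (tmatvec n k (D_sympow m k A Xs) (ptensor x)) = dcoef mu k m).
  { rewrite tnorm_nrm2, (nrm2_ext _ _ (fun I => Cscale (dcoef mu k m) (ptensor w I))).
    - rewrite nrm2_scale, nrm2_ptensor, Hw, pow1, Rmult_1_r.
      apply sqrt_square, dcoef_nonneg; auto.
    - intros I HI; rewrite tmatvec_D_sympow by auto.
      rewrite <- (length_seq m 0) at 2; rewrite <- length_rev.
      apply dtensor_ptensor; auto. }
  destruct (is_sym_opnorm_exists n k (D_sympow m k A Xs) (dcoef a k m) (ptensor x))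
    as [s [Hs Hle]]; auto using ptensor_symmetric.
  { apply D_sympow_norm_le; [apply is_opnorm_le | intros; apply is_opnorm_le]; auto. }
  rewrite Hval in Hle; apply Rle_trans with s; auto.
  apply Hb; exists Xs; auto.
Qed.

Lemma continuity_pt_le_at_lub (f : R -> R) (S : R -> Prop) l b :
  is_lub S l -> continuity_pt f l -> (forall s, S s -> f s <= b) -> f l <= b.
Proof.
  intros [Hub Hleast] Hf Hb; apply Rnot_lt_le; intros Hlt.
  destruct (Hf (f l - b)) as [d [Hd Hclose]]; [lra |].
  assert (Hnear : exists s, S s /\ l - d < s).
  { apply not_all_not_ex; intros Hno.
    enough (l <= l - d) by lra.
    apply Hleast; intros s Hs; apply Rnot_lt_le; intros Hsd; apply (Hno s); auto. }
  destruct Hnear as [s [Hs Hsd]]; pose proof (Hub s Hs); pose proof (Hb s Hs).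
  destruct (Req_dec s l) as [-> | Hne]; [lra |].
  assert (Hdist : R_dist (f s) (f l) < f l - b).
  { apply Hclose; split; [split; [constructor | auto] |].
    simpl; unfold R_dist; rewrite Rabs_left1; lra. }
  unfold R_dist in Hdist; apply Rabs_def2 in Hdist; lra.
Qed.

Theorem theorem3p3 (n m k : nat) (A : Mat) (normA : R)
  (Hm1 : (1 <= m)%nat) (Hmk : (m <= k)%nat) (Hkn : (k <= n)%nat)
  (HnormA : is_opnorm n A normA) :
  is_D_sympow_norm n m k A
    (INR (fact k) / INR (fact (k - m)) * normA ^ (k - m)).
Proof.
  assert (Hn : (1 <= n)%nat) by lia.
  rewrite <- dcoef_closed by auto; split.
  - intros s [Xs [HXs Hs]]; apply Hs; intros s' [v [_ [Hv ->]]].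
    rewrite <- (Rmult_1_r (dcoef normA k m)), <- Hv.
    apply D_sympow_norm_le; [apply is_opnorm_le | intros; apply is_opnorm_le]; auto.
  - intros b Hb.
    apply (continuity_pt_le_at_lub (fun a => dcoef a k m) _ _ _ HnormA (dcoef_continuous k m normA)).
    intros s [x [Hx ->]]; rewrite vnorm_nrm2, sqrt_eq1 in Hx by apply nrm2_nonneg.
    apply (dcoef_le_D_sympow_norm_ub n m k A normA); auto.
Qed.
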